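(* Let $n,k\ge 0$ be integers. The number of partitions $\lambda$ with $\lambda_1\le k$ and $i_{2n}(\lambda)<\infty$ equals $2^k\binom{n+k}{k}$. Equivalently, the total homology $\bigoplus_i \mathrm{H}_i(\mathfrak{H}_V(E);\mathbf{C})$, for $\dim V=2n$ and $\dim E=k$, decomposes as a direct sum of exactly $2^k\binom{n+k}{k}$ irreducible $\mathbf{GL}(E)\times\mathbf{Sp}(V)$-modules, pairwise non-isomorphic.
   Context: Partitions, $\lambda_1$ (the largest part), $\ell(\lambda)$, $|\lambda|$, $\lambda^\dagger$ as usual. Modification rule (defines $i_{2n}(\lambda)\in\mathbf{Z}_{\ge0}\cup\{\infty\}$ and $\tau_{2n}(\lambda)$), recursively: if $\ell(\lambda)\le n$, put $i_{2n}(\lambda)=0$, $\tau_{2n}(\lambda)=\lambda$. If $\ell(\lambda)>n$, let $R_\lambda$ be the border strip (connected skew diagram with no $2\times 2$ square) of $2(\ell(\lambda)-n-1)$ boxes along the rim of $\lambda$ starting at the first box of the last row of $\lambda$, if it exists. If $R_\lambda$ exists, is nonempty, and $\lambda\setminus R_\lambda$ is a partition, then $i_{2n}(\lambda)=c(R_\lambda)+i_{2n}(\lambda\setminus R_\lambda)$ and $\tau_{2n}(\lambda)=\tau_{2n}(\lambda\setminus R_\lambda)$ with $c(R_\lambda)$ the number of columns of $R_\lambda$; otherwise $i_{2n}(\lambda)=\infty$. The Lie algebra $\mathfrak{H}_V(E)=(E\otimes V)\oplus\mathrm{Sym}^2(E)$ for symplectic $(V,\omega_V)$ has bracket $[(e\otimes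 v,x),(e'\otimes v',x')]=(0,\omega_V(v,v')ee')$. *)

From mathcomp Require Import all_boot.
Set Implicit Arguments.
Unset Strict Implicit.
Unset Printing Implicit Defensive.

(* Rows/columns of the Young
   diagram are indexed from 0: box (i,j) is in row i, column j. *)
Definition is_partition (la : seq nat) : bool :=
  sorted geq la && all (fun x => 0 < x) la.

Definition part1 (la : seq nat) : nat := head 0 la.

Definition plength (la : seq nat) : nat := size la.

Definition in_diagram (la : seq nat) (b : nat * nat) : bool :=
  (b.1 < size la) && (b.2 < nth 0 la b.1).

(* Boxes of row i lying on the rim (boxes (i,j) with (i+1,j+1) not in la),
   listed from left to right.  In the last row every box is a rim box. *)
Definition rim_row (la : seq nat) (i : nat) : seq (nat * nat) :=
  if i == (size la).-1 then [seq (i, j) | j <- iota 0 (nth 0 la i)]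
  else [seq (i, j) | j <- iota (nth 0 la i.+1).-1
                                 (nth 0 la i - (nth 0 la i.+1).-1)].

(* The rim of la traversed as a connected path starting at the first box of
   the last row, moving right along the last row, then up and right. *)
Definition rim_path (la : seq nat) : seq (nat * nat) :=
  flatten [seq rim_row la i | i <- rev (iota 0 (size la))].

Definition border_strip (la : seq nat) (m : nat) : option (seq (nat * nat)) :=
  if m <= size (rim_path la) then Some (take m (rim_path la)) else None.

Definition remaining_rows (la : seq nat) (R : seq (nat * nat)) : seq nat :=
  [seq count (fun j => (i, j) \notin R) (iota 0 (nth 0 la i))
  | i <- iota 0 (size la)].

Definition skew_is_partition (la : seq nat) (R : seq (nat * nat)) : bool :=
  let mu := remaining_rows la R in
  sorted geq mu &&
  all (fun i => all (fun j => (in_diagram la (i, j) && ((i, j) \notin R))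
                              == (j < nth 0 mu i))
                    (iota 0 (part1 la)))
      (iota 0 (size la)).

Definition skew_partition (la : seq nat) (R : seq (nat * nat)) : seq nat :=
  filter (fun x => 0 < x) (remaining_rows la R).

Definition ncols (R : seq (nat * nat)) : nat := size (undup (map snd R)).

(* The modification rule; None encodes infinity.  [fuel] bounds the number of
   recursive steps (each step removes >= 1 box, so |la|+1 suffices). *)
Fixpoint i2n_aux (fuel n : nat) (la : seq nat) : option nat :=
  if size la <= n then Some 0 else
  match fuel with
  | 0 => None
  | f.+1 =>
    match border_strip la (2 * (size la - n - 1)) with
    | Some R =>
      if (R != [::]) && skew_is_partition la R
      then omap (addn (ncols R)) (i2n_aux f n (skew_partition la R))
      else None
    | None => None
    end
  end.

Definition i2n (n : nat) (la : seq nat) : option nat :=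
  i2n_aux (sumn la).+1 n la.

From Stdlib Require Import ZArith Lia.
From mathcomp Require Import all_boot zify.
Set Implicit Arguments. Unset Strict Implicit. Unset Printing Implicit Defensive.

(* For a partition la and n : nat put X_n(la) = {la_i + n - i | i : nat}, a set
   of integers containing every v <= n - l(la) but not n - l(la) + 1.
   1. Rim geometry.  The part of the rim lying in rows >= r has
      Q_r = la_r + l(la) - 1 - r boxes; the first m boxes of the rim form a
      removable border strip exactly when m = Q_r for some row r, and removing
      it lowers each row i >= r to la_{i+1} - 1.
   2. Beta-sets.  When m = 2(l - n - 1), such a removal trades d = l - n - 1
      for -d in X_n.  By induction along the modification rule,
      i_{2n}(la) < oo iff X_n(la) is balanced: 0 lies in it and, for every
      d > 0, d or -d does.
   3. Words.  If la_1 <= k and X_n(la) is balanced then l(la) <= 2n + k + 1,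
      so X_n(la) is recorded by its trace on [-(n+k), n+k]: a boolean word of
      length 2(n+k)+1 with exactly k false letters, true in the middle and
      true at one end of each symmetric pair.  This is a bijection.
   4. Such balanced words are enumerated by peeling off symmetric end pairs,
      which gives 2^k * 'C(n+k, k) of them; the theorem follows. *)

Lemma geq_trans : transitive geq.
Proof. exact: rev_trans leq_trans. Qed.

Lemma geq_refl : reflexive geq.
Proof. exact: leqnn. Qed.

Lemma count_iota_interval s e A : s + e <= A ->
  count (fun j => (s <= j) && (j < s + e)) (iota 0 A) = e.
Proof.
move=> le_seA.
have -> : iota 0 A = iota 0 s ++ iota s e ++ iota (s + e) (A - (s + e)).
  by rewrite -!iotaD; congr iota; lia.
rewrite !count_cat.
rewrite (eq_in_count (a2 := pred0)); last by move=> x; rewrite mem_iota /=; lia.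
rewrite (eq_in_count (s := iota s e) (a2 := predT)); last by move=> x; rewrite mem_iota /=; lia.
rewrite (eq_in_count (s := iota (s + e) _) (a2 := pred0));
  last by move=> x; rewrite mem_iota /=; lia.
by rewrite !count_pred0 count_predT size_iota addn0.
Qed.

Lemma count_iota_out_interval s e A : s + e <= A ->
  count (fun j => ~~ ((s <= j) && (j < s + e))) (iota 0 A) = A - e.
Proof.
move=> le_seA; have := count_predC (fun j => (s <= j) && (j < s + e)) (iota 0 A).
rewrite count_iota_interval // size_iota => total; by rewrite -[in RHS]total addKn.
Qed.

Lemma nth_filter_pos (s : seq nat) i : sorted geq s ->
  nth 0 [seq x <- s | 0 < x] i = nth 0 s i.
Proof.
elim: s i => [|x s IH] i //= s_sorted.
have s'_sorted : sorted geq s := path_sorted s_sorted.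
case: x s_sorted => [|x] s_sorted /=; last by case: i => [|i] //=; rewrite IH.
have s_zero : all (geq 0) s := order_path_min geq_trans s_sorted.
have -> : [seq x <- s | 0 < x] = [::].
  rewrite (eq_in_filter (a2 := pred0)) ?filter_pred0 //.
  by move=> y /(allP s_zero) /=; lia.
case: i => [|i] //=; case: (ltnP i (size s)) => hi; last by rewrite nth_default.
by move/allP: s_zero => /(_ _ (mem_nth 0 hi)) /=; case: (nth 0 s i).
Qed.

Lemma sumn_filter_pos (s : seq nat) : sumn [seq x <- s | 0 < x] = sumn s.
Proof. by elim: s => [|[|x] s IH] //=; rewrite IH. Qed.

Section Rim.
Variable la : seq nat.
Hypothesis la_part : is_partition la.

Lemma part_pos i : i < size la -> 0 < nth 0 la i.
Proof. by move: la_part => /andP[_ /allP pos] hi; apply: pos; exact: mem_nth. Qed.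

Lemma part_nonincr i j : i <= j -> nth 0 la j <= nth 0 la i.
Proof.
move=> le_ij; case: (ltnP j (size la)) => hj; last by rewrite [nth _ _ j]nth_default.
move: la_part => /andP[la_sorted _].
apply: (sorted_leq_nth geq_trans geq_refl 0 la_sorted) => //; rewrite inE //.
exact: leq_ltn_trans le_ij hj.
Qed.

(* Column of the leftmost rim box in row i (the rim boxes of row i are those
   not lying diagonally above a box of row i+1). *)
Definition rim_start i := (nth 0 la i.+1).-1.

Lemma rim_start_le i : rim_start i <= nth 0 la i.
Proof. by have := part_nonincr (leqnSn i); rewrite /rim_start; lia. Qed.

Lemma rim_row_eq i : i < size la ->
  rim_row la i = [seq (i, j) | j <- iota (rim_start i) (nth 0 la i - rim_start i)].
Proof.
move=> hi; rewrite /rim_row /rim_start; case: eqP => [last_row|] //.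
have -> : i.+1 = size la by lia.
by rewrite [nth _ _ (size la)]nth_default //= subn0.
Qed.

Definition rim_below r :=
  size (flatten [seq rim_row la i | i <- rev (iota r (size la - r))]).

Lemma rim_below_out r : size la <= r -> rim_below r = 0.
Proof. by move=> hr; rewrite /rim_below (_ : size la - r = 0) //; lia. Qed.

Lemma rim_below_S r : r < size la ->
  rim_below r = (nth 0 la r - rim_start r) + rim_below r.+1.
Proof.
move=> hr; rewrite /rim_below -(subnSK hr) /= rev_cons map_rcons flatten_rcons.
by rewrite size_cat rim_row_eq // size_map size_iota addnC.
Qed.

(* Q_r = la_r + l(la) - 1 - r: the rim below row r is a lattice path from the
   first box of the last row to the last box of row r. *)
Lemma rim_below_closed r : r < size la -> rim_below r = nth 0 la r + (size la).-1 - r.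
Proof.
move=> hr; move Ht: (size la - r) => t.
elim: t r hr Ht => [|t IH] r hr Ht; first lia.
rewrite rim_below_S //; case: (ltnP r.+1 (size la)) => hr1.
  rewrite IH //; last lia.
  by have := part_pos hr1; have := part_nonincr (leqnSn r); rewrite /rim_start; lia.
by rewrite rim_below_out // /rim_start (nth_default _ hr1); lia.
Qed.

Lemma rim_below_nonincr i j : i <= j -> rim_below j <= rim_below i.
Proof.
move=> le_ij; move Ht: (j - i) => t; elim: t i le_ij Ht => [|t IH] i le_ij Ht.
  by have -> : j = i by lia.
case: (ltnP i (size la)) => hi; last by rewrite !rim_below_out //; lia.
by rewrite (rim_below_S hi); have := IH i.+1; lia.
Qed.

Lemma size_rim_path : size (rim_path la) = rim_below 0.
Proof. by rewrite /rim_below subn0. Qed.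

Lemma rim_path_split i : i < size la ->
  rim_path la =
    flatten [seq rim_row la i' | i' <- rev (iota i.+1 (size la - i.+1))]
    ++ rim_row la i ++ flatten [seq rim_row la i' | i' <- rev (iota 0 i)].
Proof.
move=> hi; rewrite /rim_path.
have -> : iota 0 (size la) = iota 0 i ++ i :: iota i.+1 (size la - i.+1).
  by rewrite -{1}(subnKC (ltnW hi)) iotaD add0n -(subnSK hi).
by rewrite rev_cat rev_cons map_cat map_rcons flatten_cat flatten_rcons -catA.
Qed.

Lemma mem_rim_rows x s : x \in flatten [seq rim_row la i | i <- s] -> x.1 \in s.
Proof.
move=> /flattenP [s' /mapP [i hi ->]].
by rewrite /rim_row; case: ifP => _ /mapP [j _ ->].
Qed.

Lemma mem_rim_take m i j : i < size la ->
  ((i, j) \in take m (rim_path la)) =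
  (rim_start i <= j) &&
  (j < rim_start i + minn (m - rim_below i.+1) (nth 0 la i - rim_start i)).
Proof.
move=> hi; rewrite (rim_path_split hi) take_cat -/(rim_below i.+1).
have notin_below : (i, j) \notin
    flatten [seq rim_row la i' | i' <- rev (iota i.+1 (size la - i.+1))].
  by apply/negP => /mem_rim_rows; rewrite mem_rev mem_iota /=; lia.
have notin_above : (i, j) \notin flatten [seq rim_row la i' | i' <- rev (iota 0 i)].
  by apply/negP => /mem_rim_rows; rewrite mem_rev mem_iota /=; lia.
case: ifP => hm.
  have -> : m - rim_below i.+1 = 0 by lia.
  rewrite (negbTE (contra (@mem_take _ _ _ _) notin_below)) min0n addn0.
  by case: leqP => //= h; rewrite ltnNge h.
rewrite mem_cat (negbTE notin_below) /= take_cat rim_row_eq // size_map size_iota.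
have inj_pair : injective (@pair nat nat i) by move=> x y [].
case: ifP => hm2.
  by rewrite -map_take take_iota mem_map // mem_iota.
rewrite mem_cat (negbTE (contra (@mem_take _ _ _ _) notin_above)) orbF mem_map //.
by rewrite mem_iota (_ : minn _ _ = nth 0 la i - rim_start i) //; lia.
Qed.

Lemma size_remaining_rows R : size (remaining_rows la R) = size la.
Proof. by rewrite /remaining_rows size_map size_iota. Qed.

Lemma remaining_rows_take m i : i < size la ->
  nth 0 (remaining_rows la (take m (rim_path la))) i =
  nth 0 la i - minn (m - rim_below i.+1) (nth 0 la i - rim_start i).
Proof.
move=> hi; rewrite /remaining_rows (nth_map 0) ?size_iota // nth_iota // add0n.
rewrite (eq_in_count (a2 := fun j => ~~ ((rim_start i <= j) &&
           (j < rim_start i + minn (m - rim_below i.+1) (nth 0 la i - rim_start i))))).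
  by rewrite count_iota_out_interval //; have := rim_start_le i; lia.
by move=> j _; rewrite mem_rim_take.
Qed.

Lemma remaining_rows_below r i : r < size la ->
  nth 0 (remaining_rows la (take (rim_below r) (rim_path la))) i =
  if i < r then nth 0 la i else (nth 0 la i.+1).-1.
Proof.
move=> hr; case: (ltnP i (size la)) => hi.
  rewrite remaining_rows_take //.
  have := rim_below_S hi; have := rim_start_le i; rewrite /rim_start.
  case: ltngtP => hir.
  - by have := rim_below_nonincr hir; lia.
  - by have := rim_below_nonincr hir; have := rim_below_S hr; lia.
  - by subst i; lia.
rewrite nth_default ?size_remaining_rows // ltnNge (leq_trans (ltnW hr) hi) /=.
by rewrite nth_default //; lia.
Qed.

Lemma rim_below_removable r : r < size la ->
  skew_is_partition la (take (rim_below r) (rim_path la)).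
Proof.
move=> hr; apply/andP; split.
  apply/(sortedP 0) => i; rewrite size_remaining_rows => hi.
  rewrite !remaining_rows_below //=.
  have := part_nonincr (leqnSn i); have := part_nonincr (leqnSn i.+1).
  by case: (ltnP i.+1 r) => h; [rewrite (ltnW h) | case: (ltnP i r)]; lia.
apply/allP => i; rewrite mem_iota => /andP [_ hi]; apply/allP => j _.
rewrite /in_diagram /= hi /= mem_rim_take // remaining_rows_below //.
have := rim_below_S hi; have := rim_start_le i; rewrite /rim_start.
case: (ltngtP i r) => hir.
- by have := rim_below_nonincr hir; lia.
- by have := rim_below_nonincr hir; have := rim_below_S hr; lia.
- by subst i; lia.
Qed.

(* ... and every other strip length strictly inside the rim is not removable:
   it would leave a hole at the end of row r. *)
Lemma rim_take_not_removable m r : r < size la ->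
  rim_below r.+1 < m < rim_below r ->
  ~~ skew_is_partition la (take m (rim_path la)).
Proof.
move=> hr hm; apply/negP => /andP [_ /allP shape].
have := shape r; rewrite mem_iota hr => /(_ isT) /allP /(_ (nth 0 la r).-1).
have la_r_pos := part_pos hr; have := part_nonincr (leq0n r).
rewrite mem_iota /part1 -nth0 => le_r0; rewrite (_ : 0 <= _ < 0 + _) //; last lia.
move=> /(_ isT); rewrite /in_diagram /= hr /= mem_rim_take // remaining_rows_take //.
by have := rim_below_S hr; have := rim_start_le r; rewrite /rim_start; lia.
Qed.

Lemma rim_take_row m : 0 < m -> m <= rim_below 0 ->
  exists2 r, r < size la & rim_below r.+1 < m <= rim_below r.
Proof.
move=> m_pos m_le.
suff: forall t r, size la - r = t -> m <= rim_below r ->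
    exists2 r', r' < size la & rim_below r'.+1 < m <= rim_below r' by apply; eauto.
elim=> [|t IH] r Ht hr; first by rewrite rim_below_out in hr; lia.
case: (ltnP (rim_below r.+1) m) => h; first by exists r; lia.
by apply: (IH r.+1) => //; lia.
Qed.

End Rim.

Lemma border_strip_stuck la m : is_partition la ->
  (forall r, r < size la -> rim_below la r != m) ->
  if border_strip la m is Some R then ~~ ((R != [::]) && skew_is_partition la R)
  else true.
Proof.
move=> la_part not_Q; rewrite /border_strip size_rim_path //.
case: ifP => // m_le; case: (posnP m) => [-> | m_pos]; first by rewrite take0.
have [r hr /andP [Q_lt Q_ge]] := rim_take_row la_part m_pos m_le.
have m_lt : m < rim_below la r by move: (not_Q r hr); rewrite ltn_neqAle eq_sym Q_ge => ->.
by rewrite (negbTE (rim_take_not_removable la_part hr _)) ?andbF // Q_lt m_lt.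
Qed.

Lemma sumn_map_le (f g : nat -> nat) s :
  (forall i, i \in s -> f i <= g i) -> sumn (map f s) <= sumn (map g s).
Proof.
elim: s => [|x s IH] le_fg //=.
by rewrite leq_add ?le_fg ?mem_head // IH // => i hi; rewrite le_fg // inE hi orbT.
Qed.

Lemma sumn_map_lt (f g : nat -> nat) s :
  (forall i, i \in s -> f i <= g i) -> (exists2 i, i \in s & f i < g i) ->
  sumn (map f s) < sumn (map g s).
Proof.
elim: s => [|x s IH] le_fg [i] //=; rewrite inE => /orP [/eqP -> lt_fg | hi lt_fg].
  by rewrite -addSn leq_add // sumn_map_le // => j hj; rewrite le_fg // inE hj orbT.
rewrite -addnS leq_add ?le_fg ?mem_head // IH //; last by exists i.
by move=> j hj; rewrite le_fg // inE hj orbT.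
Qed.

Definition beta (n : nat) (la : seq nat) (v : Z) : Prop :=
  exists i, (Z.of_nat (nth 0%N la i) + Z.of_nat n - Z.of_nat i)%Z = v.

Definition balanced (n : nat) (la : seq nat) : Prop :=
  beta n la 0 /\ forall d, 0 < d -> beta n la (Z.of_nat d) \/ beta n la (- Z.of_nat d).

Section BetaSet.
Variable n : nat.
Variable la : seq nat.
Hypothesis la_part : is_partition la.

Lemma beta_index_inj i j :
  (Z.of_nat (nth 0%N la i) + Z.of_nat n - Z.of_nat i =
   Z.of_nat (nth 0%N la j) + Z.of_nat n - Z.of_nat j)%Z -> i = j.
Proof.
by move=> e; case: (ltngtP i j) => h //; have := part_nonincr la_part (ltnW h); lia.
Qed.

Lemma beta_low v : (v <= Z.of_nat n - Z.of_nat (size la))%Z -> beta n la v.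
Proof. by move=> hv; exists (Z.to_nat (Z.of_nat n - v)); rewrite nth_default //; lia. Qed.

Lemma beta_gap : ~ beta n la (Z.of_nat n - Z.of_nat (size la) + 1).
Proof.
move=> [i]; case: (ltnP i (size la)) => hi; first by have := part_pos la_part hi; lia.
by rewrite nth_default //; lia.
Qed.

Lemma beta_le_top v : beta n la v -> (v <= Z.of_nat (part1 la) + Z.of_nat n)%Z.
Proof. by move=> [i <-]; have := part_nonincr la_part (leq0n i); rewrite /part1 -nth0; lia. Qed.

Lemma balanced_short : size la <= n -> balanced n la.
Proof. by move=> hl; split => [|d d_pos]; [|right]; apply: beta_low; lia. Qed.

(* A balanced beta-set of a long partition contains d = l(la) - n - 1, since
   -d is the gap n - l(la) + 1. *)
Lemma balanced_top : n < size la -> balanced n la ->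
  beta n la (Z.of_nat (size la) - Z.of_nat n - 1).
Proof.
move=> long [beta0 beta_pm]; case: (posnP (size la - n - 1)) => d0.
  by rewrite (_ : (_ - _ - 1)%Z = 0%Z) //; lia.
case: (beta_pm _ d0) => h.
  by rewrite (_ : (_ - _ - 1)%Z = Z.of_nat (size la - n - 1)) //; lia.
by case: beta_gap; rewrite (_ : (_ - _ + 1)%Z = (- Z.of_nat (size la - n - 1))%Z) //; lia.
Qed.

Lemma beta_top_rim : n < size la ->
  beta n la (Z.of_nat (size la) - Z.of_nat n - 1) <->
  exists2 r, r < size la & rim_below la r = 2 * (size la - n - 1).
Proof.
move=> long; split => [[i hi] | [r hr]]; last first.
  by rewrite rim_below_closed // => hQ; exists r; lia.
case: (ltnP i (size la)) => hil; last by move: hi; rewrite nth_default //; lia.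
by exists i => //; rewrite rim_below_closed //; lia.
Qed.

Definition strip_removed r := skew_partition la (take (rim_below la r) (rim_path la)).

Lemma nth_strip_removed r i : r < size la ->
  nth 0 (strip_removed r) i = if i < r then nth 0 la i else (nth 0 la i.+1).-1.
Proof.
move=> hr; have /andP [rows_sorted _] := rim_below_removable la_part hr.
by rewrite /strip_removed /skew_partition nth_filter_pos ?remaining_rows_below.
Qed.

Lemma strip_removed_part r : r < size la -> is_partition (strip_removed r).
Proof.
move=> hr; have /andP [rows_sorted _] := rim_below_removable la_part hr.
by rewrite /is_partition sorted_filter ?filter_all //; exact: geq_trans.
Qed.

(* Each step of the rule shrinks |la|, so the fuel |la| + 1 suffices. *)
Lemma strip_removed_smaller r : r < size la -> sumn (strip_removed r) < sumn la.
Proof.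
move=> hr; rewrite /strip_removed /skew_partition sumn_filter_pos.
set rows := remaining_rows _ _.
rewrite -[in X in _ < X](mkseq_nth 0 la) -(mkseq_nth 0 rows) /mkseq size_remaining_rows.
have := part_nonincr la_part; have := part_pos la_part hr.
move=> la_r_pos nonincr; apply: sumn_map_lt => [i _ | ].
  by rewrite /rows remaining_rows_below //; case: ifP => // _; have := nonincr i i.+1; lia.
exists r; first by rewrite mem_iota.
by rewrite /rows remaining_rows_below // ltnn; have := nonincr r r.+1; lia.
Qed.

(* When la_r + n - r = d := l(la) - n - 1, removing the rim below row r
   replaces d by -d in the beta-set. *)
Lemma beta_strip_removed r v : r < size la ->
  (Z.of_nat (nth 0%N la r) + Z.of_nat n - Z.of_nat r = Z.of_nat (size la) - Z.of_nat n - 1)%Z ->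
  beta n (strip_removed r) v <->
  (beta n la v /\ v <> (Z.of_nat (size la) - Z.of_nat n - 1)%Z) \/
  v = (Z.of_nat n - Z.of_nat (size la) + 1)%Z.
Proof.
move=> hr beta_r; have la_r_pos := part_pos la_part hr.
split => [[i] | [[[i <-] v_ne] | ->]].
- rewrite nth_strip_removed //; case: ifP => hir.
    move=> <-; left; split; first by exists i.
    by move=> e; rewrite -beta_r in e; have := beta_index_inj e; lia.
  case: (ltnP i.+1 (size la)) => hi.
    have := part_pos la_part hi => pos <-; left; split; first by exists i.+1; lia.
    move=> e; rewrite -beta_r in e; suff : i.+1 = r by lia.
    by apply: beta_index_inj; lia.
  rewrite nth_default //= => <-; case: (ltnP i (size la)) => hi2; first by right; lia.
  by left; split; [exists i; rewrite nth_default //; lia | lia].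
- case: (ltngtP i r) => hir.
  + by exists i; rewrite nth_strip_removed // hir.
  + case: (ltnP i (size la)) => hi.
      exists i.-1; rewrite nth_strip_removed // ltnNge (_ : r <= i.-1) /=; last lia.
      by rewrite prednK; [have := part_pos la_part hi; lia | lia].
    exists i; rewrite nth_strip_removed // ltnNge (_ : r <= i) /=; last lia.
    by rewrite !nth_default //; lia.
  + by subst i; case: v_ne; rewrite -beta_r.
- exists (size la).-1; rewrite nth_strip_removed // ltnNge (_ : r <= (size la).-1) /=; last lia.
  by rewrite prednK ?nth_default //=; lia.
Qed.

Lemma balanced_strip_removed r : r < size la -> n.+1 < size la ->
  (Z.of_nat (nth 0%N la r) + Z.of_nat n - Z.of_nat r = Z.of_nat (size la) - Z.of_nat n - 1)%Z ->
  balanced n (strip_removed r) <-> balanced n la.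
Proof.
move=> hr long beta_r; have beta_d : beta n la (Z.of_nat (size la) - Z.of_nat n - 1).
  by exists r.
have swap := fun v => beta_strip_removed v hr beta_r.
split => [[beta0 beta_pm] | [beta0 beta_pm]]; split.
- by case/swap: beta0 => [[]|] //; lia.
- move=> e e_pos; case: (beta_pm e e_pos) => /swap [[h _]|h]; [by left | lia | by right |].
  by left; rewrite (_ : Z.of_nat e = Z.of_nat (size la) - Z.of_nat n - 1)%Z //; lia.
- by apply/swap; left; split => //; lia.
- move=> e e_pos.
  case: (Z.eq_dec (Z.of_nat e) (Z.of_nat (size la) - Z.of_nat n - 1)) => e_d.
    by right; apply/swap; right; lia.
  by case: (beta_pm e e_pos) => h; [left | right]; apply/swap; left; split => //; lia.
Qed.

End BetaSet.

Section ModificationRule.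
Variable n : nat.

Lemma i2n_aux_strip f la r : is_partition la -> n < size la -> r < size la ->
  rim_below la r = 2 * (size la - n - 1) ->
  i2n_aux f.+1 n la =
  omap (addn (ncols (take (rim_below la r) (rim_path la))))
       (i2n_aux f n (strip_removed la r)).
Proof.
move=> la_part long hr hQ; rewrite /= leqNgt long /= -hQ.
rewrite /border_strip size_rim_path // rim_below_nonincr // rim_below_removable //.
rewrite -size_eq0 size_takel ?size_rim_path ?rim_below_nonincr //.
have Q_pos : rim_below la r != 0.
  by rewrite rim_below_closed //; have := part_pos la_part hr; lia.
by rewrite Q_pos.
Qed.

Lemma i2n_aux_stuck f la : is_partition la -> n < size la ->
  (forall r, r < size la -> rim_below la r != 2 * (size la - n - 1)) ->
  i2n_aux f.+1 n la = None.
Proof.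
move=> la_part long not_Q; rewrite /= leqNgt long /=.
by have := border_strip_stuck la_part not_Q; case: border_strip => [R /negbTE ->|].
Qed.

Lemma i2n_aux_balanced f la : is_partition la -> sumn la < f ->
  i2n_aux f n la <> None <-> balanced n la.
Proof.
elim: f la => [|f IH] la la_part small; first by [].
have [short | long] : size la <= n \/ n < size la by lia.
  by rewrite /= short; split => // _; exact: balanced_short.
case: (boolP (has (fun r => rim_below la r == 2 * (size la - n - 1))
                  (iota 0 (size la)))) => [/hasP [r] | no_r].
  rewrite mem_iota => /andP [_ hr] /eqP hQ.
  have beta_r : (Z.of_nat (nth 0%N la r) + Z.of_nat n - Z.of_nat r =
                 Z.of_nat (size la) - Z.of_nat n - 1)%Z.
    by move: hQ; rewrite rim_below_closed //; lia.
  have long2 : n.+1 < size la.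
    by move: hQ; rewrite rim_below_closed //; have := part_pos la_part hr; lia.
  have smaller := strip_removed_smaller la_part hr.
  rewrite (i2n_aux_strip _ la_part long hr hQ).
  rewrite -(balanced_strip_removed la_part hr long2 beta_r).
  rewrite -IH ?strip_removed_part //; last by lia.
  by case: i2n_aux.
rewrite i2n_aux_stuck //; last first.
  by move=> r hr; apply: contraNN no_r => hQ; apply/hasP; exists r; rewrite ?mem_iota.
split=> // /(balanced_top la_part long) /(beta_top_rim la_part long) [r hr hQ].
by case/hasP: no_r; exists r; rewrite ?mem_iota ?hQ.
Qed.

Lemma i2n_finite la : is_partition la -> i2n n la <> None <-> balanced n la.
Proof. by move=> la_part; apply: i2n_aux_balanced. Qed.

End ModificationRule.

(* Balanced words of radius P: boolean words of length 2P+1 (a window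
   indexed by P, P-1, ..., -P) with q false letters, true in the middle and
   true at one end of every symmetric pair. *)
Definition balanced_word P q (w : seq bool) : Prop :=
  [/\ size w = (2 * P).+1, count negb w = q, nth false w P &
      forall d, 0 < d <= P -> nth false w (P - d) || nth false w (P + d)].

Definition wrap (a b : bool) (w : seq bool) : seq bool := a :: rcons w b.

(* Balanced words are built from the middle outwards; the new end pair is
   (true, true), or (true, false) / (false, true) at the cost of one hole. *)
Fixpoint balanced_words P q : seq (seq bool) :=
  match P with
  | 0 => if q is 0 then [:: [:: true]] else [::]
  | P'.+1 => [seq wrap true true w | w <- balanced_words P' q] ++
      (if q is q'.+1 then [seq wrap true false w | w <- balanced_words P' q'] ++
                          [seq wrap false true w | w <- balanced_words P' q']
       else [::])
  end.

Lemma size_balanced_words P q : size (balanced_words P q) = 2 ^ q * 'C(P, q).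
Proof.
elim: P q => [|P IH] [|q] //=; first by rewrite bin0n muln0.
  by rewrite cats0 size_map IH !bin0.
by rewrite !size_cat !size_map !IH binS expnS; lia.
Qed.

Lemma wrap_inj a b : injective (wrap a b).
Proof. by move=> x y [] /rcons_inj []. Qed.

Lemma mem_wrap a b s x : x \in [seq wrap a b w | w <- s] ->
  head false x = a /\ last false x = b.
Proof. by move=> /mapP [w _ ->]; rewrite /= last_rcons. Qed.

Lemma uniq_balanced_words P q : uniq (balanced_words P q).
Proof.
elim: P q => [|P IH] [|q] //=; first by rewrite cats0 (map_inj_uniq (@wrap_inj _ _)) IH.
rewrite !cat_uniq !(map_inj_uniq (@wrap_inj _ _)) !IH /= andbT.
apply/andP; split.
  apply/hasP => [[x]]; rewrite mem_cat => /orP [] /mem_wrap [h1 h2] /mem_wrap [h3 h4].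
    by rewrite h2 in h4.
  by rewrite h1 in h3.
by apply/hasP => [[x /mem_wrap [h1 _] /mem_wrap [h3 _]]]; rewrite h1 in h3.
Qed.

Lemma nth_wrap a b w i : nth false (wrap a b w) i =
  if i == 0 then a else if i == (size w).+1 then b else nth false w i.-1.
Proof.
case: i => [|i] //=; rewrite nth_rcons eqSS.
by case: (ltngtP i (size w)) => // h; rewrite nth_default //; lia.
Qed.

Lemma balanced_word_wrap P q a b w : size w = (2 * P).+1 ->
  balanced_word P.+1 q (wrap a b w) <->
  [/\ a || b, count negb w + ~~ a + ~~ b = q, nth false w P &
      forall d, 0 < d <= P -> nth false w (P - d) || nth false w (P + d)].
Proof.
move=> size_w; rewrite /balanced_word.
have -> : size (wrap a b w) = (2 * P.+1).+1 by rewrite /= size_rcons size_w; lia.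
have -> : count negb (wrap a b w) = count negb w + ~~ a + ~~ b.
  by rewrite /= -cats1 count_cat /=; lia.
have -> : nth false (wrap a b w) P.+1 = nth false w P.
  by rewrite nth_wrap size_w; do 2 (case: eqP => ?; first lia).
have inner d : 0 < d <= P ->
    nth false (wrap a b w) (P.+1 - d) || nth false (wrap a b w) (P.+1 + d) =
    nth false w (P - d) || nth false w (P + d).
  move=> hd; rewrite !nth_wrap size_w; do 4 (case: eqP => ?; first lia).
  by rewrite (_ : (P.+1 - d).-1 = P - d) 1?(_ : (P.+1 + d).-1 = P + d) //; lia.
have ends : nth false (wrap a b w) (P.+1 - P.+1) || nth false (wrap a b w) (P.+1 + P.+1)
    = a || b.
  by rewrite !nth_wrap size_w subnn /=; case: eqP => ? //; lia.
split=> [[_ hc mid pairs] | [ab hc mid pairs]]; split => //.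
- by rewrite -ends; apply: pairs; lia.
- by move=> d hd; rewrite -inner //; apply: pairs; lia.
- move=> d /andP [d_pos d_le]; case: (ltnP d P.+1) => hdP.
    by rewrite inner ?pairs //; lia.
  have -> : d = P.+1 by lia.
  by rewrite ends.
Qed.

Lemma mem_balanced_words P q w : w \in balanced_words P q <-> balanced_word P q w.
Proof.
elim: P q w => [|P IH] q w.
  split=> [|[size_w hc mid _]].
    by case: q => [|q] //=; rewrite inE => /eqP ->; split => // d; lia.
  case: w size_w hc mid => [|[] [|y w]] //= _.
  by case: q => //= _; rewrite inE.
have IHwrap q'' q' a b w' : w' \in balanced_words P q' ->
    q' + ~~ a + ~~ b = q'' -> a || b -> balanced_word P.+1 q'' (wrap a b w').
  move=> /IH [size_w' hc mid pairs] hq ab; apply/balanced_word_wrap => //.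
  by split => //; rewrite hc.
split.
  rewrite /= mem_cat => /orP [/mapP [w' hw' ->] | ].
    by apply: (IHwrap _ _ _ _ _ hw') => //=; rewrite !addn0.
  case: q => [|q] //; rewrite mem_cat => /orP [] /mapP [w' hw' ->];
    by apply: (IHwrap _ _ _ _ _ hw'); rewrite //= ?addn0 ?addn1.
move=> bal; have [size_w _ _ _] := bal.
case: w size_w bal => [|a w1] //= size_w1.
case/lastP: w1 size_w1 => [|w b]; rewrite ?size_rcons /= => size_w; first lia.
have {}size_w : size w = (2 * P).+1.
  by move: size_w; rewrite -[size w]/(@size bool w); lia.
move/(balanced_word_wrap q a b size_w) => [ab hc mid pairs].
have inner q' : count negb w = q' -> w \in balanced_words P q' by move=> hq'; apply/IH.
rewrite /= mem_cat; case: a b ab hc => [] [] //= _ hc.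
- by rewrite map_f // inner //; lia.
- case: q hc => [|q] hc; first lia.
  by rewrite mem_cat map_f ?orbT // inner //; lia.
- case: q hc => [|q] hc; first lia.
  by rewrite mem_cat map_f ?orbT // inner //; lia.
Qed.

(* A word is read as the boundary of a Young diagram: each true letter is a
   row, whose length is the number of false letters to its right. *)
Fixpoint word_rows (w : seq bool) : seq nat :=
  match w with
  | [::] => [::]
  | true :: w' => count negb w' :: word_rows w'
  | false :: w' => word_rows w'
  end.

Definition word_partition (w : seq bool) : seq nat := [seq x <- word_rows w | 0 < x].

Lemma word_rows_bound w : all (fun x => x <= count negb w) (word_rows w).
Proof.
elim: w => [|[] w IH] //=; first by rewrite leqnn.
by apply: sub_all IH => x /=; lia.
Qed.

Lemma word_rows_sorted w : sorted geq (word_rows w).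
Proof.
elim: w => [|[] w IH] //=.
by case: (word_rows w) IH (word_rows_bound w) => [|y s] //= -> /andP [-> _].
Qed.

Lemma size_word_rows w : size (word_rows w) = count id w.
Proof. by elim: w => [|[] w IH] //=; rewrite IH. Qed.

Lemma word_partition_part w : is_partition (word_partition w).
Proof.
by rewrite /is_partition filter_all sorted_filter ?word_rows_sorted //; exact: geq_trans.
Qed.

Lemma word_partition_part1 w : part1 (word_partition w) <= count negb w.
Proof.
rewrite /part1 /word_partition; have := word_rows_bound w.
case E: [seq x <- word_rows w | 0 < x] => [|x s] //= /allP; apply.
by have := mem_head x s; rewrite -E mem_filter => /andP [].
Qed.

Lemma word_rows_beta w (c v : Z) :
  (exists i, i < size (word_rows w) /\
     (Z.of_nat (nth 0%N (word_rows w) i) + c - Z.of_nat i = v)%Z) <->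
  (exists p, [/\ p < size w, nth false w p & (Z.of_nat (count negb w) + c - Z.of_nat p = v)%Z]).
Proof.
elim: w c => [|b w IH] c; first by split => [[i [hi _]] | [p [hp _]]].
rewrite [size (b :: w)]/=; case: b.
- have -> : word_rows (true :: w) = count negb w :: word_rows w by [].
  have -> : count negb (true :: w) = count negb w by [].
  split=> [[[|i] [hi hv]] | [[|p] [hp letter hv]]].
  + by exists 0; split => //; rewrite /= in hv; lia.
  + have [|p [hp letter hv']] := (IH (c - 1)%Z).1.
      by exists i; split => //; rewrite /= in hv; lia.
    by exists p.+1; split => //; lia.
  + by exists 0; split => //=; lia.
  + have [|i [hi hv']] := (IH (c - 1)%Z).2; first by exists p; split => //; lia.
    by exists i.+1; split => //; rewrite [nth _ _ _]/=; lia.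
- have -> : word_rows (false :: w) = word_rows w by [].
  have -> : count negb (false :: w) = (count negb w).+1 by [].
  split=> [/(IH c) [p [hp letter hv]] | [[|p] [hp letter hv]] //].
    by exists p.+1; split => //; lia.
  by apply/(IH c); exists p; split => //; lia.
Qed.

Fixpoint rows_word (prev : nat) (rows : seq nat) : seq bool :=
  match rows with
  | [::] => nseq prev false
  | r :: rs => nseq (prev - r) false ++ true :: rows_word r rs
  end.

Lemma count_rows_word prev rows : path geq prev rows ->
  count negb (rows_word prev rows) = prev.
Proof.
elim: rows prev => [|r rs IH] prev /=; first by rewrite count_nseq mul1n.
by move=> /andP [le_r rs_path]; rewrite count_cat count_nseq /= IH //; lia.
Qed.

Lemma size_rows_word prev rows : path geq prev rows ->
  size (rows_word prev rows) = prev + size rows.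
Proof.
elim: rows prev => [|r rs IH] prev /=; first by rewrite size_nseq addn0.
by move=> /andP [le_r rs_path]; rewrite size_cat size_nseq /= IH //; lia.
Qed.

Lemma word_rows_nseq m w : word_rows (nseq m false ++ w) = word_rows w.
Proof. by elim: m. Qed.

Lemma rows_wordK prev rows : path geq prev rows -> word_rows (rows_word prev rows) = rows.
Proof.
elim: rows prev => [|r rs IH] prev /=.
  by move=> _; rewrite -[nseq prev false]cats0 word_rows_nseq.
by move=> /andP [le_r rs_path]; rewrite word_rows_nseq /= count_rows_word // IH.
Qed.

Section Window.
Variables n k : nat.
Local Notation P := (n + k).

Lemma beta_word_partition w v : size w = (2 * P).+1 -> count negb w = k ->
  beta n (word_partition w) v <->
  (exists p, [/\ p < (2 * P).+1, nth false w p & v = (Z.of_nat P - Z.of_nat p)%Z]) \/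
  (v <= - Z.of_nat P - 1)%Z.
Proof.
move=> size_w holes.
have size_rows : size (word_rows w) = (2 * n + k).+1.
  by rewrite size_word_rows; have := count_predC id w; rewrite size_w holes; lia.
rewrite /beta /word_partition; split.
  move=> [i]; rewrite nth_filter_pos ?word_rows_sorted // => hv.
  case: (ltnP i (size (word_rows w))) => hi; last by right; move: hv; rewrite nth_default //; lia.
  have [|p [hp letter hv']] := (word_rows_beta w (Z.of_nat n) v).1; first by exists i.
  by left; exists p; split => //; lia.
move=> [[p [hp letter ->]] | hv].
  have [|i [_ hv]] := (word_rows_beta w (Z.of_nat n) (Z.of_nat P - Z.of_nat p)).2.
    by exists p; split; rewrite ?size_w //; lia.
  by exists i; rewrite nth_filter_pos ?word_rows_sorted.
exists (Z.to_nat (Z.of_nat n - v)).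
by rewrite nth_filter_pos ?word_rows_sorted // nth_default //; lia.
Qed.

Lemma letter_beta w p : size w = (2 * P).+1 -> count negb w = k -> p < (2 * P).+1 ->
  nth false w p <-> beta n (word_partition w) (Z.of_nat P - Z.of_nat p).
Proof.
move=> size_w holes hp; rewrite beta_word_partition //.
split => [letter | ]; first by left; exists p.
by move=> [[p' [_ letter hv]] | ]; [have -> : p = p' by lia | lia].
Qed.

(* A balanced partition with la_1 <= k has at most 2n + k + 1 rows: the value
   d = l(la) - n - 1 lies in X_n(la) (as -d is the gap), so d <= la_1 + n. *)
Lemma balanced_length la : is_partition la -> part1 la <= k -> balanced n la ->
  size la <= 2 * n + k + 1.
Proof.
move=> la_part la_k bal; case: (leqP (size la) n) => long; first lia.
by have := beta_le_top la_part (balanced_top la_part long bal); lia.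
Qed.

(* Distinct balanced words give distinct partitions, since every letter is
   determined by the beta-set. *)
Lemma word_partition_inj :
  {in balanced_words P k &, injective word_partition}.
Proof.
move=> w1 w2 /mem_balanced_words [size1 holes1 _ _] /mem_balanced_words [size2 holes2 _ _] e.
apply: (@eq_from_nth _ false); first by rewrite size1 size2.
move=> p; rewrite size1 => hp.
apply/idP/idP => letter.
  by apply/(letter_beta size2 holes2 hp); rewrite -e; apply/(letter_beta size1 holes1 hp).
by apply/(letter_beta size1 holes1 hp); rewrite e; apply/(letter_beta size2 holes2 hp).
Qed.

Lemma word_partition_balanced w : w \in balanced_words P k ->
  [/\ is_partition (word_partition w), part1 (word_partition w) <= k &
      balanced n (word_partition w)].
Proof.
move=> /mem_balanced_words [size_w holes mid pairs].
split; [exact: word_partition_part | by rewrite -holes word_partition_part1 |].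
split; first by apply/(beta_word_partition _ size_w holes); left; exists P; split => //; lia.
move=> d d_pos; case: (ltnP P d) => d_big.
  by right; apply/(beta_word_partition _ size_w holes); right; lia.
have /orP [] := pairs d (introT andP (conj d_pos d_big)) => letter; [left | right];
  apply/(beta_word_partition _ size_w holes); left.
  by exists (P - d); split => //; lia.
by exists (P + d); split => //; lia.
Qed.

(* Conversely, pad la with zero rows to 2n + k + 1 rows and take its word. *)
Lemma partition_word la : is_partition la -> part1 la <= k -> balanced n la ->
  exists2 w, w \in balanced_words P k & word_partition w = la.
Proof.
move=> la_part la_k bal; have /andP [la_sorted la_pos] := la_part.
set rows := la ++ nseq (2 * n + k + 1 - size la) 0.
have rows_path : path geq k rows.
  rewrite cat_path; apply/andP; split.
    by case: la la_sorted la_k {la_part la_pos bal rows} => //= x s -> ->.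
  by elim: (_ - _) (last k la) => [|m IH] y //=; rewrite IH andbT.
have size_rows : size rows = 2 * n + k + 1.
  by rewrite size_cat size_nseq; have := balanced_length la_part la_k bal; lia.
set w := rows_word k rows.
have w_la : word_partition w = la.
  rewrite /word_partition rows_wordK // filter_cat (all_filterP la_pos).
  by rewrite (eq_in_filter (a2 := pred0)) ?filter_pred0 ?cats0 // => x /nseqP [->].
have size_w : size w = (2 * P).+1 by rewrite size_rows_word // size_rows; lia.
have holes : count negb w = k by rewrite count_rows_word.
have letter p : p <= 2 * P -> beta n la (Z.of_nat P - Z.of_nat p) -> nth false w p.
  by move=> hp beta_p; apply/(letter_beta size_w holes); rewrite ?w_la //; lia.
exists w => //; apply/mem_balanced_words; split => //.
  by apply: letter; [lia | rewrite Z.sub_diag; case: bal].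
move=> d /andP [d_pos d_le]; apply/orP.
case: bal => _ /(_ d d_pos) [beta_d | beta_md]; [left | right]; apply: letter; try lia.
  by rewrite (_ : (_ - _)%Z = Z.of_nat d) //; lia.
by rewrite (_ : (_ - _)%Z = (- Z.of_nat d)%Z) //; lia.
Qed.

End Window.

Theorem mainTheorem2 (n k : nat) :
  exists s : seq (seq nat),
    [/\ uniq s,
        (forall la : seq nat,
            la \in s <-> [/\ is_partition la, part1 la <= k & i2n n la <> None])
      & size s = 2 ^ k * 'C(n + k, k)].
Proof.
exists (map word_partition (balanced_words (n + k) k)); split.
- by rewrite map_inj_in_uniq ?uniq_balanced_words //; exact: word_partition_inj.
- move=> la; split => [/mapP [w hw ->] | [la_part la_k finite]].
    have [w_part w_k w_bal] := word_partition_balanced hw.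
    by split => //; apply/i2n_finite.
  have [w hw <-] := partition_word la_part la_k ((i2n_finite n la_part).1 finite).
  exact: map_f.
- by rewrite size_map size_balanced_words.
Qed.
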